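(* For all $G,H\subseteq A$ and every $\varphi\in\mathcal{L}_{CoRGAL}$, the formula $\langle[G]\rangle\varphi\rightarrow\langle[G\cup H]\rangle\varphi$ is valid.
   Context: Fix a finite set $A$ of agents and a countable set $P$ of propositional variables. The language $\mathcal{L}_{CoRGAL}$ is given by $\varphi ::= p \mid \neg\varphi \mid (\varphi\wedge\varphi) \mid K_a\varphi \mid [\varphi]\varphi \mid [G,\varphi]\varphi \mid [\langle G\rangle]\varphi$ with $p\in P$, $a\in A$, $G\subseteq A$. $\mathcal{L}_{EL}$ is the fragment built only from $p,\neg,\wedge,K_a$. Duals: $\langle\psi\rangle\varphi:=\neg[\psi]\neg\varphi$, $\langle[G]\rangle\varphi:=\neg[\langle G\rangle]\neg\varphi$. For $G\subseteq A$, $\mathcal{L}^G_{EL}$ is the set of formulas $\bigwedge_{i\in G}K_i\varphi_i$ with each $\varphi_i\in\mathcal{L}_{EL}$; $\psi_G,\chi_G$ range over $\mathcal{L}^G_{EL}$. Epistemic models $M=(W,\sim,V)$: $W\neq\emptyset$, each $\sim_a$ an equivalence relation, $V:P\to\mathcal{P}(W)$; $M^\varphi$ is the restriction of $M$ to $\{v:(M,v)\models\varphi\}$. Semantics: standard for $p,\neg,\wedge,K_a$; $(M,w)\models[\varphi]\psi$ iff $(M,w)\models\varphi$ implies $(M^\varphi,w)\models\psi$; $(M,w)\models[G,\chi]\varphi$ iff $(M,w)\models\chi$ and for all $\psi_G$, $(M,w)\models[\psi_G\wedge\chi]\varphi$; $(M,w)\models[\langle G\rangle]\varphi$ iff for every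 $\psi_G$ there is $\chi_{A\setminus G}$ with $(M,w)\models\psi_G\to\langle\psi_G\wedge\chi_{A\setminus G}\rangle\varphi$. Thus $(M,w)\models\langle[G]\rangle\varphi$ iff there is $\psi_G$ such that for all $\chi_{A\setminus G}$, $(M,w)\models\psi_G\wedge[\psi_G\wedge\chi_{A\setminus G}]\varphi$. A formula is valid if true at every pointed model. *)

From HB Require Import structures.
From mathcomp Require Import ssreflect ssrfun ssrbool eqtype ssrnat seq choice fintype bigop finset.
Set Implicit Arguments. Unset Strict Implicit. Unset Printing Implicit Defensive.

Section CoRGAL.
Variable A : finType.

Inductive form : Type :=
| Var  : nat -> form
| Neg  : form -> form
| Conj : form -> form -> form
| Kn   : A -> form -> form
| Ann  : form -> form -> form
| GAnn : {set A} -> form -> form -> form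
| Coal : {set A} -> form -> form.

Fixpoint isEL (f : form) : bool :=
  match f with
  | Var _ => true
  | Neg g => isEL g
  | Conj g h => isEL g && isEL h
  | Kn _ g => isEL g
  | _ => false
  end.

Definition Top : form := Neg (Conj (Var 0) (Neg (Var 0))).
Definition Imp (f g : form) : form := Neg (Conj f (Neg g)).
Definition Dia (f g : form) : form := Neg (Ann f (Neg g)).
Definition DiaCoal (G : {set A}) (f : form) : form := Neg (Coal G (Neg f)).

Definition bigK (G : {set A}) (phi : A -> form) : form :=
  \big[Conj/Top]_(i in G) Kn i (phi i).

Definition inLG (G : {set A}) (psi : form) : Prop :=
  exists phi : A -> form, (forall i, isEL (phi i)) /\ psi = bigK G phi.

Record model : Type := Model {
  world : Type;
  rel : A -> world -> world -> Prop;
  val : nat -> world -> Prop;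
  rel_refl : forall a w, rel a w w;
  rel_sym : forall a w v, rel a w v -> rel a v w;
  rel_trans : forall a w v u, rel a w v -> rel a v u -> rel a w u
}.

Variable M : model.

(* Satisfaction in the submodel of M with domain D (D = all worlds gives M;
   restriction M^phi corresponds to shrinking D). *)

(* standard semantics of epistemic formulas (used for the quantified
   L^G_EL formulas, which are epistemic) *)
Fixpoint satEL (D : world M -> Prop) (f : form) (w : world M) : Prop :=
  match f with
  | Var p => val p w
  | Neg g => ~ satEL D g w
  | Conj g h => satEL D g w /\ satEL D h w
  | Kn a g => forall v, D v -> rel a w v -> satEL D g v
  | _ => False
  end.

Fixpoint sat (D : world M -> Prop) (f : form) (w : world M) {struct f} : Prop :=
  match f with
  | Var p => val p w
  | Neg g => ~ sat D g w
  | Conj g h => sat D g w /\ sat D h w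
  | Kn a g => forall v, D v -> rel a w v -> sat D g v
  | Ann g h => sat D g w -> sat (fun v => D v /\ sat D g v) h w
  | GAnn G chi g =>
      sat D chi w /\
      forall psi, inLG G psi ->
        ((satEL D psi w /\ sat D chi w) ->
         sat (fun v => D v /\ (satEL D psi v /\ sat D chi v)) g w)
  | Coal G g =>
      forall psi, inLG G psi ->
        exists chi, inLG (~: G) chi /\
          (satEL D psi w ->
           (* <psi /\ chi> g, i.e. ~ [psi /\ chi] ~ g *)
           ~ ((satEL D psi w /\ satEL D chi w) ->
              ~ sat (fun v => D v /\ (satEL D psi v /\ satEL D chi v)) g w))
  end.

End CoRGAL.

Definition holds (A : finType) (M : model A) (w : world M) (f : form A) : Prop :=
  @sat A M (fun _ => True) f w.

Definition valid (A : finType) (f : form A) : Prop :=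
  forall (M : model A) (w : world M), holds w f.

(* If the larger coalition G' cannot force an outcome, neither can G ⊆ G':
   an announcement psi_G of G is equivalent to the announcement of G' that
   adds K_i ⊤ for i ∈ G'∖G, and the opponents' reply chi to the latter,
   padded with K_i ⊤ on G'∖G, is a reply to psi_G leading to the same updated
   model. As <[G]> is the dual of [<G>], the theorem is the contrapositive of
   this for G' = G ∪ H. *)
From mathcomp Require Import ssreflect ssrbool eqtype seq fintype bigop finset.
From Stdlib Require Import FunctionalExtensionality PropExtensionality.

Section Coalitions.
Variables (A : finType) (M : model A).
Implicit Types (D : world M -> Prop) (S T : {set A}) (p : A -> form A).

Definition pad_top T p (i : A) : form A := if i \in T then p i else Top A.

Lemma inLG_bigK_pad_top S T p :
  (forall i, isEL (p i)) -> inLG S (bigK S (pad_top T p)).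
Proof. by move=> ELp; exists (pad_top T p); split=> // i; rewrite /pad_top; case: ifP. Qed.

Lemma satEL_big_seq D (r : seq A) (F : A -> form A) v :
  satEL D (\big[@Conj A/Top A]_(i <- r) F i) v <->
  (forall i, i \in r -> satEL D (F i) v).
Proof.
elim: r => [|x r IH]; first by rewrite big_nil; split=> // _ /=; tauto.
rewrite big_cons /= IH; split=> [[Fx Fr] i | Fxr].
  by rewrite inE => /orP [/eqP -> | /Fr].
by split=> [|i ir]; apply: Fxr; rewrite inE ?eqxx ?ir ?orbT.
Qed.

Lemma satEL_bigK D S p v :
  satEL D (bigK S p) v <-> (forall i, i \in S -> satEL D (Kn i (p i)) v).
Proof.
rewrite /bigK -big_filter satEL_big_seq.
by split=> Sp i; [move=> iS | rewrite mem_filter => /andP [iS _]];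
  apply: Sp; rewrite ?mem_filter ?iS ?mem_index_enum.
Qed.

Lemma satEL_KTop D i v : satEL D (Kn i (Top A)) v.
Proof. by move=> /= u _ _; tauto. Qed.

Lemma satEL_bigK_pad_top D S T p v :
  satEL D (bigK S (pad_top T p)) v <-> satEL D (bigK (S :&: T) p) v.
Proof.
rewrite !satEL_bigK; split=> Sp i.
  by rewrite inE => /andP [iS iT]; have := Sp i iS; rewrite /pad_top iT.
move=> iS; rewrite /pad_top; case: ifP => iT; last exact: satEL_KTop.
by apply: Sp; rewrite inE iS iT.
Qed.

Lemma sat_Coal_subset D (G G' : {set A}) f w :
  G \subset G' -> sat D (Coal G' f) w -> sat D (Coal G f) w.
Proof.
move=> sGG' CG' _ [p [ELp ->]].
have [_ [[c [ELc ->]] G'wins]] := CG' _ (inLG_bigK_pad_top G' G _ ELp).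
exists (bigK (~: G) (pad_top (~: G') c)); split; first exact: inLG_bigK_pad_top.
have psiE v : satEL D (bigK G' (pad_top G p)) v <-> satEL D (bigK G p) v.
  by rewrite satEL_bigK_pad_top (setIidPr sGG').
have chiE v :
    satEL D (bigK (~: G) (pad_top (~: G') c)) v <-> satEL D (bigK (~: G') c) v.
  by rewrite satEL_bigK_pad_top (setIidPr (_ : ~: G' \subset ~: G)) ?setCS.
have -> : (fun v => D v /\ (satEL D (bigK G p) v /\
                             satEL D (bigK (~: G) (pad_top (~: G') c)) v)) =
          (fun v => D v /\ (satEL D (bigK G' (pad_top G p)) v /\
                             satEL D (bigK (~: G') c) v)).
  apply: functional_extensionality => v; apply: propositional_extensionality.
  by rewrite psiE chiE.
move=> /psiE psiw nG; apply: (G'wins psiw) => -[_ chiw].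
by apply: nG; split; [apply/psiE | apply/chiE].
Qed.

End Coalitions.

Theorem mainTheorem4 (A : finType) (G H : {set A}) (phi : form A) :
  valid (Imp (DiaCoal G phi) (DiaCoal (G :|: H) phi)).
Proof.
move=> M w [notCG notnotCGH]; apply: notnotCGH => CGH.
exact: notCG (@sat_Coal_subset A M _ G (G :|: H) (Neg phi) w (subsetUl G H) CGH).
Qed.
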